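(* $$\sum_{n=0}^\infty \frac{\binom{2n}{n}}{(2n+1)(n+1)^2\, 2^{2n}} = 2\pi + 4\log 2 - 8.$$
   Context: $\binom{2n}{n}$ is the central binomial coefficient; $\log$ is the natural logarithm. *)

From Stdlib Require Import Reals.
From Coquelicot Require Import Coquelicot.
Open Scope R_scope.

Definition term7 (n : nat) : R :=
  Binomial.C (2 * n) n / ((2 * INR n + 1) * (INR n + 1) ^ 2 * 2 ^ (2 * n)).

From Stdlib Require Import Reals Lra Lia Psatz Factorial.
From Coquelicot Require Import Coquelicot.
Open Scope R_scope.

(* Let c_n = C(2n,n)/4^n, whose generating function is 1/sqrt(1-y).  Since
   c_(n+1) = c_n (2n+1)/(2n+2), the summand equals
   4 c_n/(2n+1) - 4 c_n/(n+1) + 2 c_(n+1)/(n+1).  Integrating the generating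
   functions of c_n and c_(n+1) gives sum c_n y^(n+1)/(n+1) = 2 - 2 sqrt(1-y) and
   sum c_(n+1) y^(n+1)/(n+1) = 2 ln 2 - 2 ln(1 + sqrt(1-y)), while
   x |-> sum c_n x^(2n+1)/(2n+1) is asin.  The coefficients are nonnegative, so
   each series converges to the supremum of its generating function on [0,1),
   namely 2, 2 ln 2 and pi/2. *)

Lemma pow_ge_1_sub_mul (y : R) (n : nat) : 0 <= y -> 1 - INR n * (1 - y) <= y ^ n.
Proof.
  intros Hy. induction n as [|n IH]; [simpl; lra|].
  rewrite S_INR. simpl (y ^ S n).
  assert (0 <= INR n * ((1 - y) * (1 - y)))
    by (apply Rmult_le_pos; [apply pos_INR | apply Rle_0_sqr]).
  assert (y * (1 - INR n * (1 - y)) <= y * y ^ n) by (apply Rmult_le_compat_l; lra).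
  nra.
Qed.

Lemma le_of_forall_sub_mul_le (A B L : R) :
  0 <= B -> (forall d, 0 < d <= 1 -> A - d * B <= L) -> A <= L.
Proof.
  intros HB H. destruct (Rle_or_lt A L) as [HAL | HLA]; [exact HAL |].
  set (d := (A - L) / (A - L + B)).
  assert (Hd : 0 < d <= 1).
  { unfold d. split; [apply Rdiv_lt_0_compat; lra |].
    apply Rmult_le_reg_r with (A - L + B); [lra |].
    unfold Rdiv. rewrite Rmult_assoc, Rinv_l; lra. }
  assert (Hgap : A - L - d * B = (A - L) * (A - L) / (A - L + B)) by (unfold d; field; lra).
  assert (0 < (A - L) * (A - L) / (A - L + B)) by (apply Rdiv_lt_0_compat; nra).
  specialize (H d Hd). lra.
Qed.

Lemma ln_1_plus_lt (d : R) : 0 < d -> ln (1 + d) < d.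
Proof.
  intros Hd. rewrite <- (ln_exp d) at 2.
  apply ln_increasing; [lra | apply exp_ineq1; lra].
Qed.

Lemma one_sub_le_cos (d : R) : 0 <= d <= 1 -> 1 - d <= cos d.
Proof.
  intros Hd. replace d with (2 * (d / 2)) at 2 by field. rewrite cos_2a_sin.
  assert (0 <= sin (d / 2)) by (apply sin_ge_0; assert (H := PI2_1); lra).
  assert (sin (d / 2) <= d / 2).
  { destruct (Req_dec d 0) as [-> | Hd0].
    - replace (0 / 2) with 0 by field. rewrite sin_0. lra.
    - apply Rlt_le, sin_lt_x. lra. }
  nra.
Qed.

Lemma CV_radius_ge_1 (a : nat -> R) :
  (forall n, Rabs (a n) <= 1) -> Rbar_le 1 (CV_radius a).
Proof.
  intros Ha. apply (proj1 (CV_radius_bounded a)).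
  exists 1. intros n. rewrite pow1, Rmult_1_r. apply Ha.
Qed.

Lemma Rbar_lt_CV_radius (a : nat -> R) (y : R) :
  Rbar_le 1 (CV_radius a) -> Rabs y < 1 -> Rbar_lt (Rabs y) (CV_radius a).
Proof. intros Ha Hy. apply Rbar_lt_le_trans with 1; assumption. Qed.

Lemma is_series_PSeries (a : nat -> R) (y : R) :
  Rbar_lt (Rabs y) (CV_radius a) -> is_series (fun k => a k * y ^ k) (PSeries a y).
Proof.
  intros Hy. apply Series_correct.
  apply (ex_series_ext (fun k => scal (pow_n y k) (a k))).
  - intros k. rewrite pow_n_pow. apply Rmult_comm.
  - exact (CV_radius_inside a y Hy).
Qed.

Lemma sum_n_le_of_is_series (a : nat -> R) (l : R) :
  (forall n, 0 <= a n) -> is_series a l -> forall N, sum_n a N <= l.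
Proof.
  intros Ha Hl. apply is_lim_seq_incr_compare; [exact Hl |].
  intros n. rewrite sum_Sn. specialize (Ha (S n)). unfold plus; simpl. lra.
Qed.

Lemma PS_Int_nonneg (a : nat -> R) :
  (forall n, 0 <= a n) -> forall n, 0 <= PS_Int a n.
Proof.
  intros Ha [| n]; [apply Rle_refl |].
  apply Rdiv_le_0_compat; [apply Ha | apply lt_0_INR, Nat.lt_0_succ].
Qed.

Section NonnegAbel.

Variables (a : nat -> R) (L : R).
Hypothesis a_ge0 : forall n, 0 <= a n.
Hypothesis radius_a : Rbar_le 1 (CV_radius a).
Hypothesis PSeries_le : forall y, 0 <= y < 1 -> PSeries a y <= L.

Lemma sum_n_le_of_PSeries_le (N : nat) : sum_n a N <= L.
Proof.
  rewrite sum_n_Reals.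
  apply (le_of_forall_sub_mul_le _ (INR N * sum_f_R0 a N)).
  { apply Rmult_le_pos; [apply pos_INR | apply cond_pos_sum, a_ge0]. }
  intros d Hd.
  (* Bernoulli: (1 - N d) S_N <= sum_(k<=N) a_k (1-d)^k <= L; then let d -> 0. *)
  assert (Hy : 0 <= 1 - d < 1) by lra.
  assert (Hpartial : sum_f_R0 (fun k => a k * (1 - d) ^ k) N <= L).
  { eapply Rle_trans; [| apply (PSeries_le _ Hy)].
    rewrite <- sum_n_Reals. apply sum_n_le_of_is_series.
    - intros k. apply Rmult_le_pos; [apply a_ge0 | apply pow_le; lra].
    - apply is_series_PSeries, Rbar_lt_CV_radius; [exact radius_a |].
      rewrite Rabs_pos_eq; lra. }
  eapply Rle_trans; [| exact Hpartial].
  replace (sum_f_R0 a N - d * (INR N * sum_f_R0 a N))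
    with ((1 - INR N * (1 - (1 - d))) * sum_f_R0 a N) by ring.
  rewrite scal_sum. apply sum_Rle. intros k Hk.
  assert (Hkd : INR k * d <= INR N * d) by (apply Rmult_le_compat_r; [lra | apply le_INR, Hk]).
  assert (Hpow := pow_ge_1_sub_mul (1 - d) k ltac:(lra)).
  specialize (a_ge0 k). nra.
Qed.

Lemma is_series_of_PSeries_le_sup :
  (forall eps, 0 < eps -> exists y, 0 <= y < 1 /\ L - eps < PSeries a y) ->
  is_series a L.
Proof.
  intros Hsup.
  assert (Hex : ex_series a).
  { apply (ex_finite_lim_seq_incr (sum_n a) L); [| exact sum_n_le_of_PSeries_le].
    intros n. rewrite sum_Sn. specialize (a_ge0 (S n)). unfold plus; simpl. lra. }
  assert (Hle : Series a <= L).
  { apply (is_lim_seq_le (sum_n a) (fun _ => L) (Series a) L).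
    - exact sum_n_le_of_PSeries_le.
    - exact (Series_correct a Hex).
    - apply is_lim_seq_const. }
  assert (Hge : L <= Series a).
  { apply Rnot_lt_le. intros Hlt.
    destruct (Hsup (L - Series a)) as [y [Hy HLy]]; [lra |].
    assert (Series (fun k => a k * y ^ k) <= Series a).
    { apply Series_le; [| exact Hex]. intros k.
      assert (0 <= y ^ k <= 1)
        by (split; [apply pow_le | rewrite <- (pow1 k); apply pow_incr]; lra).
      specialize (a_ge0 k). split; nra. }
    unfold PSeries in HLy. lra. }
  replace L with (Series a) by lra. apply Series_correct, Hex.
Qed.

End NonnegAbel.

Lemma is_series_succ (a : nat -> R) (l : R) :
  a 0%nat = 0 -> is_series a l -> is_series (fun n => a (S n)) l.
Proof.
  intros H0 Hl. apply is_series_incr_1. rewrite H0. unfold plus; simpl.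
  rewrite Rplus_0_r. exact Hl.
Qed.

Lemma is_derive_0_const (f : R -> R) (y : R) :
  (forall t, Rabs t < 1 -> is_derive f t 0) -> Rabs y < 1 -> f y = f 0.
Proof.
  intros Hf Hy. apply Rabs_def2 in Hy.
  destruct (Rtotal_order y 0) as [Hneg | [-> | Hpos]]; [| reflexivity |].
  - apply eq_is_derive; [| exact Hneg].
    intros t Ht. apply Hf, Rabs_def1; lra.
  - symmetry. apply eq_is_derive; [| exact Hpos].
    intros t Ht. apply Hf, Rabs_def1; lra.
Qed.

Lemma PSeries_Int_primitive (a : nat -> R) (F : R -> R) :
  Rbar_le 1 (CV_radius a) ->
  (forall t, Rabs t < 1 -> is_derive F t (PSeries a t)) -> F 0 = 0 ->
  forall y, Rabs y < 1 -> PSeries (PS_Int a) y = F y.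
Proof.
  intros Ha HF HF0 y Hy.
  assert (Hderiv : forall t, Rabs t < 1 ->
            is_derive (fun t => PSeries (PS_Int a) t - F t) t 0).
  { intros t Ht.
    assert (Hint := is_derive_PSeries (PS_Int a) t).
    rewrite CV_radius_Int in Hint.
    specialize (Hint (Rbar_lt_CV_radius a t Ha Ht)).
    replace 0 with (minus (PSeries (PS_derive (PS_Int a)) t) (PSeries a t)).
    - exact (is_derive_minus _ _ t _ _ Hint (HF t Ht)).
    - rewrite (PSeries_ext (PS_derive (PS_Int a)) a); [exact (minus_eq_zero (PSeries a t)) |].
      intros n. unfold PS_derive, PS_Int. field. apply not_0_INR. discriminate. }
  assert (H := is_derive_0_const _ y Hderiv Hy). cbv beta in H.
  rewrite PSeries_0, HF0 in H. simpl in H. lra.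
Qed.

Lemma is_pseries_mul_INR (a : nat -> R) (x : R) :
  Rbar_lt (Rabs x) (CV_radius a) ->
  is_pseries (fun n => INR n * a n) x (x * PSeries (PS_derive a) x).
Proof.
  intros Hx.
  apply (is_pseries_ext (PS_incr_1 (PS_derive a))).
  - intros [| n]; [symmetry; apply Rmult_0_l | reflexivity].
  - exact (is_pseries_incr_1 _ x _ (PSeries_correct _ x (ex_pseries_derive a x Hx))).
Qed.

Lemma is_derive_asin (x : R) : -1 < x < 1 -> is_derive asin x (/ sqrt (1 - x ^ 2)).
Proof.
  intros Hx. apply is_derive_Reals.
  apply (derive_pt_eq_1 asin x _ (derivable_pt_asin x Hx)).
  rewrite derive_pt_asin. unfold Rsqr. simpl. rewrite Rmult_1_r. field.
  apply Rgt_not_eq, sqrt_lt_R0. nra.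
Qed.

Definition central (n : nat) : R := Binomial.C (2 * n) n / 2 ^ (2 * n).

Lemma central_eq_fact (n : nat) :
  central n = INR (fact (2 * n)) / (INR (fact n) * INR (fact n)) / 2 ^ (2 * n).
Proof.
  unfold central, Binomial.C. replace (2 * n - n)%nat with n by lia. reflexivity.
Qed.

Lemma central_0 : central 0 = 1.
Proof. rewrite central_eq_fact. simpl. field. Qed.

Lemma central_S (n : nat) :
  central (S n) = central n * (2 * INR n + 1) / (2 * INR n + 2).
Proof.
  rewrite !central_eq_fact.
  replace (2 * S n)%nat with (S (S (2 * n))) by lia.
  rewrite (fact_simpl (S (2 * n))), (fact_simpl (2 * n)), (fact_simpl n).
  rewrite !mult_INR, !S_INR, mult_INR. simpl INR.
  replace (2 ^ S (S (2 * n))) with (4 * 2 ^ (2 * n)) by (simpl; ring).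
  assert (INR (fact n) <> 0) by apply INR_fact_neq_0.
  assert (INR (fact (2 * n)) <> 0) by apply INR_fact_neq_0.
  assert (2 ^ (2 * n) <> 0) by (apply pow_nonzero; lra).
  assert (0 <= INR n) by apply pos_INR.
  field. repeat split; lra.
Qed.

Lemma central_pos (n : nat) : 0 < central n.
Proof.
  induction n as [| n IH]; [rewrite central_0; lra |].
  rewrite central_S. assert (0 <= INR n) by apply pos_INR.
  apply Rdiv_lt_0_compat; nra.
Qed.

Lemma central_le_1 (n : nat) : central n <= 1.
Proof.
  induction n as [| n IH]; [rewrite central_0; lra |].
  rewrite central_S. assert (0 <= INR n) by apply pos_INR.
  assert (0 < central n) by apply central_pos.
  apply Rle_trans with (central n); [| exact IH].
  apply Rmult_le_reg_r with (2 * INR n + 2); [lra |].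
  unfold Rdiv. rewrite Rmult_assoc, Rinv_l; nra.
Qed.

Lemma CV_radius_central : Rbar_le 1 (CV_radius central).
Proof.
  apply CV_radius_ge_1. intros n.
  rewrite Rabs_pos_eq; [apply central_le_1 | apply Rlt_le, central_pos].
Qed.

Lemma PSeries_central_ode (t : R) :
  Rabs t < 1 -> PSeries central t = 2 * (1 - t) * PSeries (PS_derive central) t.
Proof.
  intros Ht. assert (Hr := Rbar_lt_CV_radius central t CV_radius_central Ht).
  assert (H := is_pseries_scal 2 _ t _ (Rmult_comm t 2)
                 (is_pseries_minus _ _ t _ _
                    (PSeries_correct _ t (ex_pseries_derive _ t Hr))
                    (is_pseries_mul_INR _ t Hr))).
  rewrite (PSeries_ext central
             (PS_scal 2 (PS_minus (PS_derive central) (fun n => INR n * central n)))).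
  - rewrite (is_pseries_unique _ _ _ H).
    unfold scal, plus, opp; simpl. unfold mult; simpl. ring.
  - intros n. unfold PS_scal, PS_minus, PS_derive.
    rewrite central_S, S_INR. assert (0 <= INR n) by apply pos_INR.
    unfold scal, plus, opp; simpl. unfold mult; simpl. field. lra.
Qed.

Lemma PSeries_central (y : R) : Rabs y < 1 -> PSeries central y = / sqrt (1 - y).
Proof.
  intros Hy.
  assert (Hderiv : forall t, Rabs t < 1 ->
            is_derive (fun t => PSeries central t * sqrt (1 - t)) t 0).
  { intros t Ht. assert (Hr := Rbar_lt_CV_radius central t CV_radius_central Ht).
    apply Rabs_def2 in Ht.
    assert (Hs : 0 < sqrt (1 - t)) by (apply sqrt_lt_R0; lra).
    assert (Hss := sqrt_sqrt (1 - t) ltac:(lra)).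
    auto_derive; [repeat split; [apply ex_derive_PSeries, Hr | lra] |].
    replace (Derive (fun x => PSeries central x) t) with (PSeries (PS_derive central) t)
      by (symmetry; apply Derive_PSeries, Hr).
    rewrite (PSeries_central_ode t) by (apply Rabs_def1; lra).
    replace (1 + - t) with (1 - t) by ring.
    set (s := sqrt (1 - t)) in *. rewrite <- Hss. field. lra. }
  assert (H := is_derive_0_const _ y Hderiv Hy). cbv beta in H.
  rewrite PSeries_0, central_0, Rminus_0_r, sqrt_1, Rmult_1_r in H.
  apply Rabs_def2 in Hy. assert (0 < sqrt (1 - y)) by (apply sqrt_lt_R0; lra).
  apply (Rmult_eq_reg_r (sqrt (1 - y))); [rewrite H; field |]; lra.
Qed.

Lemma PSeries_Int_central (y : R) :
  Rabs y < 1 -> PSeries (PS_Int central) y = 2 - 2 * sqrt (1 - y).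
Proof.
  revert y. apply (PSeries_Int_primitive central (fun y => 2 - 2 * sqrt (1 - y)));
    [exact CV_radius_central | |].
  - intros t Ht. rewrite PSeries_central by exact Ht. apply Rabs_def2 in Ht.
    assert (0 < sqrt (1 - t)) by (apply sqrt_lt_R0; lra).
    auto_derive; [lra |]. replace (1 + - t) with (1 - t) by ring. field. lra.
  - rewrite Rminus_0_r, sqrt_1. ring.
Qed.

Lemma PSeries_decr_1_central (t : R) :
  Rabs t < 1 -> PSeries (PS_decr_1 central) t = / (sqrt (1 - t) * (1 + sqrt (1 - t))).
Proof.
  intros Ht.
  assert (Hdecr := PSeries_decr_1 central t
                     (CV_radius_inside _ _ (Rbar_lt_CV_radius _ _ CV_radius_central Ht))).
  rewrite PSeries_central, central_0 in Hdecr by exact Ht.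
  apply Rabs_def2 in Ht.
  assert (Hs : 0 < sqrt (1 - t)) by (apply sqrt_lt_R0; lra).
  assert (Hss := sqrt_sqrt (1 - t) ltac:(lra)).
  destruct (Req_dec t 0) as [-> | Ht0].
  { rewrite PSeries_0. unfold PS_decr_1. rewrite central_S, central_0, Rminus_0_r, sqrt_1.
    simpl. field. }
  set (s := sqrt (1 - t)) in *. set (D := PSeries (PS_decr_1 central) t) in *.
  assert (HtD : t * D = t * / (s * (1 + s))).
  { replace (t * / (s * (1 + s))) with (/ s - 1); [lra |].
    replace t with (1 - s * s) at 1 by lra. field. lra. }
  apply Rmult_eq_reg_l in HtD; assumption.
Qed.

Lemma PSeries_Int_decr_1_central (y : R) :
  Rabs y < 1 ->
  PSeries (PS_Int (PS_decr_1 central)) y = 2 * ln 2 - 2 * ln (1 + sqrt (1 - y)).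
Proof.
  revert y.
  apply (PSeries_Int_primitive _ (fun y => 2 * ln 2 - 2 * ln (1 + sqrt (1 - y)))).
  - rewrite CV_radius_decr_1. exact CV_radius_central.
  - intros t Ht. rewrite PSeries_decr_1_central by exact Ht. apply Rabs_def2 in Ht.
    assert (0 < sqrt (1 - t)) by (apply sqrt_lt_R0; lra).
    auto_derive; replace (1 + - t) with (1 - t) by ring; [repeat split; lra |].
    field. lra.
  - rewrite Rminus_0_r, sqrt_1. replace (1 + 1) with 2 by ring. ring.
Qed.

Definition central_odd (n : nat) : R := central n / (2 * INR n + 1).

Lemma central_odd_pos (n : nat) : 0 < central_odd n.
Proof.
  unfold central_odd. assert (0 <= INR n) by apply pos_INR.
  apply Rdiv_lt_0_compat; [apply central_pos | lra].
Qed.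

Lemma CV_radius_central_odd : Rbar_le 1 (CV_radius central_odd).
Proof.
  apply CV_radius_ge_1. intros n.
  rewrite Rabs_pos_eq by apply Rlt_le, central_odd_pos.
  assert (0 <= INR n) by apply pos_INR.
  assert (central n <= 1) by apply central_le_1.
  assert (0 < central n) by apply central_pos.
  unfold central_odd. apply Rmult_le_reg_r with (2 * INR n + 1); [lra |].
  unfold Rdiv. rewrite Rmult_assoc, Rinv_l; nra.
Qed.

Lemma PSeries_central_odd_ode (u : R) :
  Rabs u < 1 ->
  PSeries central_odd u + 2 * (u * PSeries (PS_derive central_odd) u) = PSeries central u.
Proof.
  intros Hu. assert (Hr := Rbar_lt_CV_radius _ u CV_radius_central_odd Hu).
  assert (H := is_pseries_plus _ _ u _ _
                 (PSeries_correct _ u (CV_radius_inside _ u Hr))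
                 (is_pseries_scal 2 _ u _ (Rmult_comm u 2) (is_pseries_mul_INR _ u Hr))).
  rewrite (PSeries_ext central
             (PS_plus central_odd (PS_scal 2 (fun n => INR n * central_odd n)))).
  - rewrite (is_pseries_unique _ _ _ H). reflexivity.
  - intros n. unfold PS_plus, PS_scal, central_odd. assert (0 <= INR n) by apply pos_INR.
    unfold scal, plus; simpl. unfold mult; simpl. field. lra.
Qed.

Lemma asin_PSeries (x : R) : Rabs x < 1 -> x * PSeries central_odd (x ^ 2) = asin x.
Proof.
  intros Hx.
  assert (Hderiv : forall t, Rabs t < 1 ->
            is_derive (fun t => t * PSeries central_odd (t ^ 2) - asin t) t 0).
  { intros t Ht. apply Rabs_def2 in Ht.
    assert (Ht2 : Rabs (t ^ 2) < 1) by (rewrite Rabs_pos_eq; nra).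
    assert (Hr := Rbar_lt_CV_radius _ _ CV_radius_central_odd Ht2).
    assert (Hasin := is_derive_asin t ltac:(lra)).
    auto_derive; change (t * (t * 1)) with (t ^ 2).
    { repeat split; [apply ex_derive_PSeries, Hr | eexists; exact Hasin]. }
    replace (Derive (fun u => PSeries central_odd u) (t ^ 2))
      with (PSeries (PS_derive central_odd) (t ^ 2))
      by (symmetry; apply Derive_PSeries, Hr).
    replace (Derive (fun u => asin u) t) with (/ sqrt (1 - t ^ 2))
      by (symmetry; apply is_derive_unique, Hasin).
    assert (Hode := PSeries_central_odd_ode _ Ht2).
    rewrite PSeries_central in Hode by exact Ht2.
    rewrite <- Hode. ring. }
  assert (H := is_derive_0_const _ x Hderiv Hx). cbv beta in H.
  rewrite asin_0 in H. lra.
Qed.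

Lemma is_series_Int_central : is_series (PS_Int central) 2.
Proof.
  apply is_series_of_PSeries_le_sup.
  - apply PS_Int_nonneg. intros n. apply Rlt_le, central_pos.
  - rewrite CV_radius_Int. exact CV_radius_central.
  - intros y Hy. rewrite PSeries_Int_central by (rewrite Rabs_pos_eq; lra).
    assert (0 <= sqrt (1 - y)) by apply sqrt_pos. lra.
  - intros eps Heps. set (d := Rmin (1 / 2) (eps / 4)).
    assert (0 < d <= 1 / 2) by (split; [apply Rmin_glb_lt | apply Rmin_l]; lra).
    assert (d <= eps / 4) by apply Rmin_r.
    exists (1 - d * d). split; [nra |].
    rewrite PSeries_Int_central by (rewrite Rabs_pos_eq; nra).
    replace (1 - (1 - d * d)) with (d * d) by ring.
    rewrite sqrt_square by lra. lra.
Qed.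

Lemma is_series_Int_decr_1_central : is_series (PS_Int (PS_decr_1 central)) (2 * ln 2).
Proof.
  apply is_series_of_PSeries_le_sup.
  - apply PS_Int_nonneg. intros n. apply Rlt_le, central_pos.
  - rewrite CV_radius_Int, CV_radius_decr_1. exact CV_radius_central.
  - intros y Hy. rewrite PSeries_Int_decr_1_central by (rewrite Rabs_pos_eq; lra).
    assert (0 <= sqrt (1 - y)) by apply sqrt_pos.
    assert (0 <= ln (1 + sqrt (1 - y))) by (rewrite <- ln_1; apply ln_le; lra).
    lra.
  - intros eps Heps. set (d := Rmin (1 / 2) (eps / 4)).
    assert (0 < d <= 1 / 2) by (split; [apply Rmin_glb_lt | apply Rmin_l]; lra).
    assert (d <= eps / 4) by apply Rmin_r.
    exists (1 - d * d). split; [nra |].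
    rewrite PSeries_Int_decr_1_central by (rewrite Rabs_pos_eq; nra).
    replace (1 - (1 - d * d)) with (d * d) by ring.
    rewrite sqrt_square by lra. assert (ln (1 + d) < d) by (apply ln_1_plus_lt; lra).
    lra.
Qed.

Lemma is_series_incr_1_central_odd : is_series (PS_incr_1 central_odd) (PI / 2).
Proof.
  assert (HPI := PI2_1).
  apply is_series_of_PSeries_le_sup.
  - intros [| n]; [apply Rle_refl | apply Rlt_le, central_odd_pos].
  - rewrite CV_radius_incr_1. exact CV_radius_central_odd.
  - intros y Hy. rewrite PSeries_incr_1.
    set (x := sqrt y).
    assert (0 <= x) by apply sqrt_pos.
    assert (Hxy : x ^ 2 = y) by (simpl; rewrite Rmult_1_r; apply sqrt_sqrt; lra).
    assert (x < 1) by nra.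
    assert (Hasin := asin_PSeries x ltac:(rewrite Rabs_pos_eq; lra)).
    rewrite Hxy in Hasin.
    replace (y * PSeries central_odd y) with (x * asin x)
      by (rewrite <- Hasin, <- Hxy; ring).
    assert (asin x <= PI / 2) by apply asin_bound.
    nra.
  - intros eps Heps. set (d := Rmin 1 (eps / 3)).
    assert (0 < d <= 1) by (split; [apply Rmin_glb_lt | apply Rmin_l]; lra).
    assert (d <= eps / 3) by apply Rmin_r.
    set (x := cos d).
    assert (Hasin : asin x = PI / 2 - d)
      by (unfold x; rewrite <- sin_shift; apply asin_sin; lra).
    assert (1 - d <= x) by (apply one_sub_le_cos; lra).
    assert (x <> 1) by (intros Hx1; rewrite Hx1, asin_1 in Hasin; lra).
    assert (x <= 1) by apply COS_bound.
    assert (Hser := asin_PSeries x ltac:(rewrite Rabs_pos_eq; lra)).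
    exists (x ^ 2). split; [split; [apply pow2_ge_0 | simpl; nra] |].
    rewrite PSeries_incr_1.
    replace (x ^ 2 * PSeries central_odd (x ^ 2)) with (x * (PI / 2 - d))
      by (rewrite <- Hasin, <- Hser; ring).
    assert (HPI4 := PI_4). nra.
Qed.

(* 4 (n+1)^2 - 4 (2n+1)(n+1) + (2n+1)^2 = (2(n+1) - (2n+1))^2 = 1. *)
Lemma term7_decomposition (n : nat) :
  term7 n = 4 * PS_incr_1 central_odd (S n) - 4 * PS_Int central (S n)
            + 2 * PS_Int (PS_decr_1 central) (S n).
Proof.
  unfold term7, PS_incr_1, PS_Int, PS_decr_1, central_odd.
  rewrite central_S. unfold central. rewrite S_INR.
  assert (0 <= INR n) by apply pos_INR.
  assert (2 ^ (2 * n) <> 0) by (apply pow_nonzero; lra).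
  field. repeat split; lra.
Qed.

Theorem mainTheorem7 :
  is_series term7 (2 * PI + 4 * ln 2 - 8).
Proof.
  set (u := fun k => 4 * PS_incr_1 central_odd k - 4 * PS_Int central k
                     + 2 * PS_Int (PS_decr_1 central) k).
  assert (Hu : is_series u (4 * (PI / 2) - 4 * 2 + 2 * (2 * ln 2))).
  { exact (is_series_plus _ _ _ _
             (is_series_minus _ _ _ _
                (is_series_scal 4 _ _ is_series_incr_1_central_odd)
                (is_series_scal 4 _ _ is_series_Int_central))
             (is_series_scal 2 _ _ is_series_Int_decr_1_central)). }
  replace (2 * PI + 4 * ln 2 - 8) with (4 * (PI / 2) - 4 * 2 + 2 * (2 * ln 2)) by field.
  apply (is_series_ext (fun n => u (S n))); [intros n; symmetry; apply term7_decomposition |].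
  apply is_series_succ; [unfold u, PS_incr_1, zero; simpl; ring | exact Hu].
Qed.
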